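(* Let $G=(V,E,w)$, the partition $SG_1,\dots,SG_m$, the object set $O$ with $|O|>k$, the query $q=(v_q,k)$, and the D$k$NN protocol be as described in the context, and assume $G$ is connected and every edge weight satisfies $w(u,v)\ge \|\mathrm{pos}(u)-\mathrm{pos}(v)\|_2$. Consider any execution of the protocol (with arbitrary interleaving and delays of message processing, and with arbitrarily stale local bounds subject to the constraint in the context). If at some time the acknowledgment buffer $\mathcal{B}_q$ is empty, then the returned set $R(q)$ (the $k$ reported objects with smallest reported distances, ties broken arbitrarily) satisfies: $|R(q)|=k$, $R(q)\subseteq O$, and for all $o\in R(q)$ and all $o'\in O\setminus R(q)$, $SD(v_q,o)\le SD(v_q,o')$.
   Context: Road network: $G=(V,E,w)$ is a finite undirected graph with non-negative edge weights $w$; each vertex $v$ has a planar position $\mathrm{pos}(v)\in\mathbb{R}^2$. $SD(u,v)$ denotes the shortest-path distance in $G$. The vertex set is partitioned into subgraphs $SG_1,\dots,SG_m$; each $SG_p$ is the induced subgraph on its vertex set, and $d_p(a,b)$ is the shortest-path distance between $a,b$ inside $SG_p$ (using only edges with both endpoints in $SG_p$). A vertex of $SG_p$ is a border vertex if it has a neighbor in some $SG_{p'}$, $p'\ne p$; such edges are external edges. Each moving object $o\in O$ has a live vertex $v(o)\in V$ (the next vertex it travels toward) and a remaining cost $\delta(o)\ge 0$; define $SD(v_q,o)=SD(v_q,v(o))+\delta(o)$. For the query $q=(v_q,k)$, let $E(v_q,SG_p)$ be the minimum Euclidean distance from $\mathrm{pos}(v_q)$ to the positions of the border vertices of $SG_p$.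 D$k$NN protocol. Each subgraph $SG_p$ keeps a table $D_p(\cdot)$ (initially $+\infty$) over its own vertices and the outside neighbors of its border vertices, and a local bound $\varepsilon_p$. A query unit collects reported pairs $(o,\text{dist})$, keeping for each object its minimum reported distance $\mathrm{rep}(o)$; the global bound $\varepsilon(t)$ at time $t$ is the $k$-th smallest value of $\mathrm{rep}$ over distinct objects reported so far ($+\infty$ if fewer than $k$). The query starts by sending the message $(v_q,0)$ to the subgraph containing $v_q$. When $SG_p$ processes a message $(v_b,\text{dist})$ with $v_b\in SG_p$: if $\text{dist}>\varepsilon_p$ or $\text{dist}>D_p(v_b)$, it does nothing further; otherwise it sets $D_p(v_b)=\text{dist}$; for each live vertex $v_i\in SG_p$ with $\text{dist}+d_p(v_b,v_i)\le D_p(v_i)$ it sets $D_p(v_i)=\text{dist}+d_p(v_b,v_i)$ and reports to the query unit every object $o$ with $v(o)=v_i$ and $D_p(v_i)+\delta(o)<\varepsilon_p$, with distance $D_p(v_i)+\delta(o)$; for each border vertex $v_j\in SG_p$ and each neighbor $v'\notin SG_p$ of $v_j$ with $\text{dist}+d_p(v_b,v_j)+w(v_j,v')\le D_p(v')$, it sets $D_p(v')$ to that value and sends the message $(v',D_p(v'))$ to the subgraph containing $v'$. Bounds: at every time $t$, each non-pruned subgraph uses a local bound $\varepsilon_p(t)\ge\varepsilon(t)$ (staleness allowed). Pruning: if at some time $t$ a subgraph $SG_p$ not containing $v_q$ satisfies $E(v_q,SG_p)>\varepsilon(t)$, it may be pruned, after which $\varepsilon_p=0$ (it discards all further messages). Acknowledgments: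 whenever a message is sent from $SG_p$ to $SG_{p'}$, a token is inserted into the buffer $\mathcal{B}_q$; the token is removed when $SG_{p'}$ has finished processing that message (including dispatching all messages it generates, whose tokens are inserted before removal). The initial message also carries a token. *)

From HB Require Import structures.
From mathcomp Require Import all_boot all_order all_algebra.
From mathcomp Require Import boolp classical_sets reals constructive_ereal ereal.
Set Implicit Arguments. Unset Strict Implicit. Unset Printing Implicit Defensive.
Import Order.TTheory GRing.Theory Num.Theory.
Local Open Scope ring_scope.
Local Open Scope classical_set_scope.

Record net (R : realType) := Net {
  V : finType;
  O : finType;
  adj : rel V;
  w : V -> V -> R;                (* edge weights (relevant on edges) *)
  pos : V -> R * R;
  m : nat;
  part : V -> 'I_m;
  vo : O -> V;
  delta : O -> R
}.
Arguments V {R} n.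
Arguments O {R} n.
Arguments adj {R} n.
Arguments w {R} n.
Arguments pos {R} n.
Arguments m {R} n.
Arguments part {R} n.
Arguments vo {R} n.
Arguments delta {R} n.

Section Defs.
Context {R : realType} (N : net R).
Local Notation V := (V N).
Local Notation O := (O N).
Local Notation adj := (adj N).
Local Notation w := (w N).
Local Notation part := (part N).

Definition euclid (a b : R * R) : R :=
  Num.sqrt ((a.1 - b.1) ^+ 2 + (a.2 - b.2) ^+ 2).

Definition wlen (u : V) (s : seq V) : R :=
  \sum_(e <- zip (u :: s) s) w e.1 e.2.

Definition SD (u v : V) : \bar R :=
  ereal_inf [set (wlen u s)%:E | s in [set s | path adj u s && (last u s == v)]].

Definition dp (p : 'I_(m N)) (a b : V) : \bar R :=
  ereal_inf [set (wlen a s)%:E | s in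
    [set s | [&& path adj a s, last a s == b & all (fun x => part x == p) (a :: s)]]].

Definition SDo (vq : V) (o : O) : \bar R := (SD vq (vo N o) + (delta N o)%:E)%E.

Definition border (p : 'I_(m N)) (v : V) : bool :=
  (part v == p) && [exists u, adj v u && (part u != p)].

Definition Edist (vq : V) (p : 'I_(m N)) : \bar R :=
  ereal_inf [set (euclid (pos N vq) (pos N b))%:E | b in [set b | border p b]].

Definition live (v : V) : bool := [exists o, vo N o == v].

Record state := State {
  Dtab : 'I_(m N) -> V -> \bar R;
  pending : seq (V * R);          (* messages (v_b, dist) sent but not yet fully
                                     processed = tokens in the buffer B_q;
                                     the target subgraph is part v_b *)
  reports : seq (O * R);
  pruned : 'I_(m N) -> bool
}.

Definition init_state (vq : V) : state :=
  State (fun _ _ => +oo%E) [:: (vq, 0)] [::] (fun _ => false).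

Definition reported (s : state) : {set O} :=
  [set o | has (fun r => r.1 == o) (reports s)].

Definition rep (s : state) (o : O) : \bar R :=
  \big[Order.min/+oo%E]_(r <- reports s | r.1 == o) (r.2)%:E.

(* k-th smallest value of rep over distinct reported objects, +oo if fewer than k
   (for k >= 1) *)
Definition eps (k : nat) (s : state) : \bar R :=
  nth +oo%E (sort (fun x y : \bar R => (x <= y)%E)
                  [seq rep s o | o <- enum (reported s)]) k.-1.

Definition out_pairs (p : 'I_(m N)) : seq (V * V) :=
  [seq vv <- [seq (a, b) | a <- enum V, b <- enum V]
     | [&& part vv.1 == p, adj vv.1 vv.2 & part vv.2 != p]].

Definition upd_fun (f : V -> \bar R) (x : V) (y : \bar R) : V -> \bar R :=
  fun v => if v == x then y else f v.

Definition process (s : state) (pre post : seq (V * R)) (vb : V) (dist : R)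
    (ep : \bar R) (ord : seq (V * V)) : state :=
  let p := part vb in
  if (ep < dist%:E)%E || (Dtab s p vb < dist%:E)%E then
    State (Dtab s) (pre ++ post) (reports s) (pruned s)
  else
    let D1 := upd_fun (Dtab s p) vb dist%:E in
    let relax (vi : V) :=
      [&& part vi == p, live vi, dp p vb vi \is a fin_num
        & ((dist + fine (dp p vb vi))%:E <= D1 vi)%E] in
    let D2 := fun v => if relax v then (dist + fine (dp p vb v))%:E else D1 v in
    let newrep :=
      [seq (o, (dist + fine (dp p vb (vo N o))) + delta N o)
         | o <- enum O & relax (vo N o) &&
             (((dist + fine (dp p vb (vo N o))) + delta N o)%:E < ep)%E] in
    let bstep (acc : (V -> \bar R) * seq (V * R)) (vv : V * V) :=
      let c := dp p vb vv.1 in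
      let val := dist + fine c + w vv.1 vv.2 in
      if (c \is a fin_num) && (val%:E <= acc.1 vv.2)%E
      then (upd_fun acc.1 vv.2 val%:E, rcons acc.2 (vv.2, val))
      else acc in
    let res := foldl bstep (D2, [::]) ord in
    State (fun p' => if p' == p then res.1 else Dtab s p')
          (pre ++ post ++ res.2)
          (reports s ++ newrep)
          (pruned s).

Inductive step (vq : V) (k : nat) : state -> state -> Prop :=
| StepProcess (s : state) pre post vb dist ep ord :
    pending s = pre ++ (vb, dist) :: post ->
    (* local bound: 0 once pruned, otherwise any (possibly stale) ep >= eps(t) *)
    (if pruned s (part vb) then ep = 0%:E else (eps k s <= ep)%E) ->
    perm_eq ord (out_pairs (part vb)) ->
    step vq k s (process s pre post vb dist ep ord)
| StepPrune (s : state) (p : 'I_(m N)) :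
    ~~ pruned s p -> part vq != p -> (eps k s < Edist vq p)%E ->
    step vq k s (State (Dtab s) (pending s) (reports s)
                   (fun p' => if p' == p then true else pruned s p')).

Definition execution (vq : V) (k : nat) (ex : nat -> state) (n : nat) : Prop :=
  ex 0 = init_state vq /\ forall i, (i < n)%N -> step vq k (ex i) (ex i.+1).

Definition returned (k : nat) (s : state) (Rq : {set O}) : Prop :=
  [/\ Rq \subset reported s, #|Rq| = minn k #|reported s|
    & forall o o', o \in Rq -> o' \in reported s :\: Rq -> (rep s o <= rep s o')%E].

End Defs.

(* Soundness: every table entry, message and report is the length of an
   actual walk from [v_q] (plus [delta]), hence bounds the true distance from
   below.  Completeness: a message can only be discarded or left unprocessed
   when its value is already accounted for, either by a table entry of the
   target subgraph, or by the global bound [eps], which never increases.  A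
   pruned subgraph is beyond [eps] because edge weights dominate Euclidean
   lengths, so every walk into it from [v_q] is at least as long as [E(v_q,SG_p)].
   Once the buffer is empty, walking along a shortest path from [v_q] shows
   that every object whose distance is below [eps] has been reported with at
   most its true distance.  As [|O| > k] and the graph is connected, at least
   [k] objects are reported, and the [k] best reports are exactly the [k]
   nearest objects. *)
From HB Require Import structures.
From mathcomp Require Import all_boot all_order all_algebra.
From mathcomp Require Import boolp classical_sets reals constructive_ereal ereal.
From mathcomp Require Import ring lra.
Set Implicit Arguments.
Unset Strict Implicit.
Unset Printing Implicit Defensive.
Import Order.TTheory GRing.Theory Num.Theory.
Local Open Scope ring_scope.

Lemma euclid_triangle {R : realType} (a b c : R * R) :
  euclid a c <= euclid a b + euclid b c.
Proof.
rewrite /euclid.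
set x1 := a.1 - b.1; set x2 := a.2 - b.2; set y1 := b.1 - c.1; set y2 := b.2 - c.2.
have -> : a.1 - c.1 = x1 + y1 by rewrite /x1 /y1; ring.
have -> : a.2 - c.2 = x2 + y2 by rewrite /x2 /y2; ring.
set X := x1 ^+ 2 + x2 ^+ 2; set Y := y1 ^+ 2 + y2 ^+ 2.
have X0 : 0 <= X by rewrite addr_ge0 ?sqr_ge0.
have Y0 : 0 <= Y by rewrite addr_ge0 ?sqr_ge0.
have cauchy_schwarz : x1 * y1 + x2 * y2 <= Num.sqrt X * Num.sqrt Y.
  rewrite -sqrtrM // (le_trans (ler_norm _)) // -sqrtr_sqr ler_sqrt ?mulr_ge0 //.
  rewrite -subr_ge0.
  have -> : X * Y - (x1 * y1 + x2 * y2) ^+ 2 = (x1 * y2 - x2 * y1) ^+ 2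
    by rewrite /X /Y; ring.
  exact: sqr_ge0.
have sX := sqr_sqrtr X0; have sY := sqr_sqrtr Y0.
have S0 : 0 <= Num.sqrt X + Num.sqrt Y by rewrite addr_ge0 ?sqrtr_ge0.
rewrite -[_ + Num.sqrt _]ger0_norm // -sqrtr_sqr ler_sqrt ?sqr_ge0 //.
rewrite /X /Y in cauchy_schwarz sX sY *; nra.
Qed.

Section Ereal.
Context {R : realType}.
Local Open Scope ereal_scope.

Lemma gee0_neqNy (x : \bar R) : 0 <= x -> x != -oo.
Proof. by case: x. Qed.

Lemma le_adde_ereal_inf (a b : \bar R) (C : set (\bar R)) :
  b != -oo -> (forall y, C y -> 0 <= y) ->
  (forall y, C y -> a <= b + y) -> a <= b + ereal_inf C.
Proof.
move=> bNy C_ge0 aC.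
have infNy : ereal_inf C != -oo by apply/gee0_neqNy/le_ereal_inf_tmp.
case: b bNy aC => [b| |] // _ aC; last by rewrite addye // leey.
by rewrite -leeBlDl //; apply: le_ereal_inf_tmp => y Cy; rewrite leeBlDl // aC.
Qed.

End Ereal.

Section KthSmallest.
Context {d : Order.disp_t} {T : orderType d} (x0 : T).
Implicit Types (s : seq T) (e : T).

Lemma sorted_nth_le s e j : sorted <=%O s ->
  (j < count (<= e)%O s)%N -> (nth x0 s j <= e)%O.
Proof.
elim: s j => [|x s IH] j // s_sorted.
have x_min : all (>= x)%O s by apply: order_path_min s_sorted; exact: le_trans.
case: j => [|j].
  rewrite -has_count => /hasP[y]; rewrite inE => /predU1P[-> //|ys ye] /=.
  exact: le_trans (allP x_min y ys) ye.
move=> /= lt_j; apply: IH; first exact: path_sorted s_sorted.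
by move: lt_j; case: (x <= e)%O => /= [|/ltnW].
Qed.

Lemma sorted_count_nth s j : sorted <=%O s -> (j < size s)%N ->
  (j < count (<= nth x0 s j)%O s)%N.
Proof.
elim: s j => [|x s IH] [|j] //= s_sorted; first by rewrite lexx.
have x_min : all (>= x)%O s by apply: order_path_min s_sorted; exact: le_trans.
move=> lt_j; have := IH j (path_sorted s_sorted) lt_j.
by rewrite (allP x_min) ?mem_nth.
Qed.

Lemma nth_sort_le s e j : (j < count (<= e)%O s)%N -> (nth x0 (sort <=%O s) j <= e)%O.
Proof.
move=> lt_j; apply: sorted_nth_le; first exact/sort_sorted/le_total.
by rewrite (permP (permEl (perm_sort _ _))).
Qed.

Lemma count_nth_sort s j : (j < size s)%N ->
  (j < count (<= nth x0 (sort <=%O s) j)%O s)%N.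
Proof.
move=> lt_j; rewrite -(permP (permEl (perm_sort <=%O s))).
by apply: sorted_count_nth; rewrite ?size_sort //; exact/sort_sorted/le_total.
Qed.

End KthSmallest.

Lemma count_enum_set (T : finType) (A : {set T}) (P : pred T) :
  count P (enum A) = #|[set x in A | P x]|.
Proof.
rewrite -size_filter -(card_uniqP _); last by rewrite filter_uniq ?enum_uniq.
by apply: eq_card => x; rewrite mem_filter mem_enum !inE andbC.
Qed.

Section Network.
Context {R : realType} (N : net R).
Hypothesis adj_sym : forall u v, adj N u v = adj N v u.
Hypothesis w_ge0 : forall u v, adj N u v -> 0 <= w N u v.
Hypothesis w_euclid : forall u v, adj N u v -> euclid (pos N u) (pos N v) <= w N u v.
Implicit Types (u v a b c : V N) (p : 'I_(m N)).
Local Open Scope ereal_scope.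

Lemma wlen_nil u : wlen u [::] = 0%R.
Proof. by rewrite /wlen big_nil. Qed.

Lemma wlen_cons u (x : V N) (s : seq (V N)) : wlen u (x :: s) = (w N u x + wlen x s)%R.
Proof. by rewrite /wlen /= big_cons. Qed.

Lemma wlen_cat u (s t : seq (V N)) : wlen u (s ++ t) = (wlen u s + wlen (last u s) t)%R.
Proof.
elim: s u => [|x s IH] u /=; first by rewrite wlen_nil add0r.
by rewrite !wlen_cons IH addrA.
Qed.

Lemma wlen_ge0 u (s : seq (V N)) : path (adj N) u s -> (0 <= wlen u s)%R.
Proof.
elim: s u => [|x s IH] u /=; first by rewrite wlen_nil.
by case/andP=> ux xs; rewrite wlen_cons addr_ge0 ?w_ge0 ?IH.
Qed.

Lemma SD_le_wlen u (s : seq (V N)) : path (adj N) u s -> SD u (last u s) <= (wlen u s)%:E.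
Proof. by move=> us; apply: ereal_inf_lbound; exists s => //=; rewrite us eqxx. Qed.

Lemma SD_ge0 u v : 0 <= SD u v.
Proof.
apply: le_ereal_inf_tmp => _ [s /= /andP[us _] <-].
by rewrite lee_fin wlen_ge0.
Qed.

Lemma dp_le_wlen p a (s : seq (V N)) : path (adj N) a s -> all (fun x => part N x == p) (a :: s) ->
  dp p a (last a s) <= (wlen a s)%:E.
Proof.
by move=> ps ins; apply: ereal_inf_lbound; exists s => //=; rewrite ps eqxx.
Qed.

Lemma dp_ge0 p a b : 0 <= dp p a b.
Proof.
apply: le_ereal_inf_tmp => _ [s /= /and3P[ps _ _] <-].
by rewrite lee_fin wlen_ge0.
Qed.

Lemma dp_fin_numPn p a b : dp p a b \isn't a fin_num -> dp p a b = +oo.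
Proof. by move: (dp_ge0 p a b); case: (dp p a b). Qed.

Lemma dp_refl p a : part N a = p -> dp p a a = 0.
Proof.
move=> pa; apply/eqP; rewrite eq_le dp_ge0 andbT.
by have := @dp_le_wlen p a [::] isT; rewrite /= pa eqxx wlen_nil; apply.
Qed.

Lemma SD_le_walk u (s : seq (V N)) y : path (adj N) u s ->
  SD y (last u s) <= SD y u + (wlen u s)%:E.
Proof.
move=> us; rewrite addeC; apply: le_adde_ereal_inf => //.
  by move=> _ [t /= /andP[yt _] <-]; rewrite lee_fin wlen_ge0.
move=> _ [t /= /andP[yt /eqP tu] <-].
rewrite -tu -EFinD addrC -wlen_cat -(last_cat y t s).
by apply: SD_le_wlen; rewrite cat_path yt tu us.
Qed.

Lemma SD_le_dp y p u v : SD y v <= SD y u + dp p u v.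
Proof.
apply: le_adde_ereal_inf; first exact/gee0_neqNy/SD_ge0.
  by move=> _ [t /= /and3P[ut _ _] <-]; rewrite lee_fin wlen_ge0.
by move=> _ [s /= /and3P[us /eqP <- _] <-]; exact: SD_le_walk.
Qed.

Lemma SD_le_edge y u v : adj N u v -> SD y v <= SD y u + (w N u v)%:E.
Proof.
move=> uv; have := @SD_le_walk u [:: v] y.
by rewrite wlen_cons wlen_nil addr0 /= uv; apply.
Qed.

Lemma dp_le_walk p a b (s : seq (V N)) : path (adj N) b s ->
  all (fun x => part N x == p) (b :: s) ->
  dp p a (last b s) <= dp p a b + (wlen b s)%:E.
Proof.
move=> bs ins; rewrite addeC; apply: le_adde_ereal_inf => //.
  by move=> _ [t /= /and3P[a_t _ _] <-]; rewrite lee_fin wlen_ge0.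
move=> _ [t /= /and3P[a_t /eqP tb int] <-].
rewrite -tb -EFinD addrC -wlen_cat -(last_cat a t s).
apply: dp_le_wlen; first by rewrite cat_path a_t tb bs.
by rewrite /= all_cat andbA int; case/andP: ins.
Qed.

Lemma dp_triangle p a b c : dp p a c <= dp p a b + dp p b c.
Proof.
apply: le_adde_ereal_inf; first exact/gee0_neqNy/dp_ge0.
  by move=> _ [t /= /and3P[bt _ _] <-]; rewrite lee_fin wlen_ge0.
by move=> _ [s /= /and3P[bs /eqP <- ins] <-]; exact: dp_le_walk.
Qed.

Lemma dp_le_edge p a u v : adj N u v -> part N u = p -> part N v = p ->
  dp p a v <= dp p a u + (w N u v)%:E.
Proof.
move=> uv pu pv; have := @dp_le_walk p a u [:: v].
by rewrite wlen_cons wlen_nil addr0 /= uv pu pv eqxx; apply.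
Qed.

Lemma walk_exits_border p u (s : seq (V N)) : path (adj N) u s -> part N u != p ->
  part N (last u s) == p ->
  exists2 b, border p b & (euclid (pos N u) (pos N b) <= wlen u s)%R.
Proof.
elim: s u => [|x s IH] u /=; first by move=> _ /negbTE ->.
case/andP=> ux xs pu ps; rewrite wlen_cons.
have [px|px] := eqVneq (part N x) p.
  exists x; first by rewrite /border px eqxx; apply/existsP; exists u; rewrite adj_sym ux pu.
  by rewrite (le_trans (w_euclid ux)) // lerDl wlen_ge0.
have [b pb ub] := IH x xs px ps; exists b => //.
by rewrite (le_trans (euclid_triangle _ (pos N x) _)) // lerD // w_euclid.
Qed.

Lemma Edist_le_SD y v : part N v != part N y -> Edist y (part N v) <= SD y v.
Proof.
move=> pvy; apply: le_ereal_inf_tmp => _ [s /= /andP[ys /eqP vE] <-].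
have pyv : part N y != part N v by rewrite eq_sym.
have [|b pb yb] := walk_exits_border ys pyv; first by rewrite vE.
by apply: le_trans (_ : _ <= (euclid (pos N y) (pos N b))%:E) _;
  [apply: ereal_inf_lbound; exists b | rewrite lee_fin].
Qed.

Section Protocol.
Variables (vq : V N) (k : nat).
Hypothesis delta_ge0 : forall o, (0 <= delta N o)%R.
Hypothesis k_gt0 : (0 < k)%N.
Implicit Types (s : state N) (o : O N) (e : \bar R).

Lemma rep_le_report s o (x : R) : (o, x) \in reports s -> rep s o <= x%:E.
Proof. by move=> ox; exact: (ge_bigmin_seq _ (o, x) _ (fun r => r.2%:E) ox). Qed.

Lemma le_rep s o e : (forall x : R, (o, x) \in reports s -> e <= x%:E) -> e <= rep s o.
Proof.
move=> le_e; rewrite /rep big_seq_cond.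
by apply: le_bigmin => [|[o' x] /andP[ox /eqP o'o]]; rewrite ?leey // le_e -?o'o.
Qed.

Lemma reported_of_rep_lty s o : rep s o < +oo -> o \in reported s.
Proof.
apply: contraTT; rewrite inE => /hasPn no_o; rewrite -leNgt.
by apply: le_rep => x /no_o; rewrite eqxx.
Qed.

Lemma rep_catr_le s s' l o : reports s' = reports s ++ l -> rep s' o <= rep s o.
Proof. by rewrite /rep => ->; rewrite big_cat /= ge_min lexx. Qed.

Definition nb_rep_le s e := #|[set o in reported s | rep s o <= e]|.

Lemma eps_le s e : (k <= nb_rep_le s e)%N -> eps k s <= e.
Proof. by move=> le_k; apply: nth_sort_le; rewrite count_map count_enum_set prednK. Qed.

Lemma nb_rep_le_eps s : (k <= #|reported s|)%N -> (k <= nb_rep_le s (eps k s))%N.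
Proof.
move=> le_k; have := @count_nth_sort _ _ +oo [seq rep s o | o <- enum (reported s)] k.-1.
by rewrite size_map -cardE prednK // count_map count_enum_set; apply.
Qed.

Lemma eps_oo s : (#|reported s| < k)%N -> eps k s = +oo.
Proof. by move=> lt_k; rewrite /eps nth_default // size_sort size_map -cardE -ltnS prednK. Qed.

Lemma eps_antimono s s' : reported s \subset reported s' ->
  (forall o, rep s' o <= rep s o) -> eps k s' <= eps k s.
Proof.
move=> sub_rep le_rep'; have [lt_k|le_k] := ltnP #|reported s| k.
  by rewrite (eps_oo lt_k) leey.
apply/eps_le/(leq_trans (nb_rep_le_eps le_k))/subset_leq_card/fintype.subsetP => o.
rewrite [in X in X -> _]inE => /andP[o_rep o_le]; rewrite inE.
by rewrite (fintype.subsetP sub_rep o o_rep) (le_trans (le_rep' o) o_le).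
Qed.

Lemma mem_out_pairs p vj v' :
  ((vj, v') \in out_pairs p) = [&& part N vj == p, adj N vj v' & part N v' != p].
Proof.
by rewrite /out_pairs mem_filter /= (allpairs_f (fun a b => (a, b))) ?mem_enum ?andbT.
Qed.

(* The intermediate results of [process] on an accepted message [(vb, dist)],
   named so that [process_accept] below holds by conversion. *)
Definition Dset s vb (dist : R) := upd_fun (Dtab s (part N vb)) vb dist%:E.

Definition relaxes s vb (dist : R) (vi : V N) :=
  [&& part N vi == part N vb, live vi, dp (part N vb) vb vi \is a fin_num
    & ((dist + fine (dp (part N vb) vb vi))%:E <= Dset s vb dist vi)].

Definition Drelax s vb (dist : R) (v : V N) :=
  if relaxes s vb dist v then (dist + fine (dp (part N vb) vb v))%:E else Dset s vb dist v.

Definition new_reports s vb (dist : R) e :=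
  [seq (o, (dist + fine (dp (part N vb) vb (vo N o))) + delta N o)%R
     | o <- enum (O N) & relaxes s vb dist (vo N o) &&
         (((dist + fine (dp (part N vb) vb (vo N o))) + delta N o)%:E < e)].

Definition border_val vb (dist : R) (vv : V N * V N) : R :=
  (dist + fine (dp (part N vb) vb vv.1) + w N vv.1 vv.2)%R.

Definition border_step vb (dist : R) (acc : (V N -> \bar R) * seq (V N * R))
    (vv : V N * V N) :=
  if (dp (part N vb) vb vv.1 \is a fin_num) && ((border_val vb dist vv)%:E <= acc.1 vv.2)
  then (upd_fun acc.1 vv.2 (border_val vb dist vv)%:E,
        rcons acc.2 (vv.2, border_val vb dist vv))
  else acc.

Definition border_loop s vb dist ord :=
  foldl (border_step vb dist) (Drelax s vb dist, [::]) ord.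

Definition discards s vb (dist : R) e :=
  (e < dist%:E) || (Dtab s (part N vb) vb < dist%:E).

Lemma process_discard s pre post vb dist e ord : discards s vb dist e ->
  process s pre post vb dist e ord = State (Dtab s) (pre ++ post) (reports s) (pruned s).
Proof. by rewrite /process /discards => ->. Qed.

Lemma process_accept s pre post vb dist e ord : ~~ discards s vb dist e ->
  process s pre post vb dist e ord =
  State (fun p' => if p' == part N vb then (border_loop s vb dist ord).1 else Dtab s p')
        (pre ++ post ++ (border_loop s vb dist ord).2)
        (reports s ++ new_reports s vb dist e) (pruned s).
Proof. by rewrite /process /discards => /negbTE ->. Qed.

Section BorderLoop.
Variables (vb : V N) (dist : R).
Implicit Types (acc : (V N -> \bar R) * seq (V N * R)) (l : seq (V N * V N)).

Lemma border_loop_le l acc v : (foldl (border_step vb dist) acc l).1 v <= acc.1 v.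
Proof.
elim: l acc => [|vv l IH] acc //=; apply: le_trans (IH _) _.
rewrite /border_step; case: ifP => //= /andP[_ le_val]; rewrite /upd_fun.
by case: eqP => [->|].
Qed.

Lemma border_loop_le_val l acc vv : vv \in l -> dp (part N vb) vb vv.1 \is a fin_num ->
  (foldl (border_step vb dist) acc l).1 vv.2 <= (border_val vb dist vv)%:E.
Proof.
elim: l acc => [|vv' l IH] acc //=; rewrite inE => /predU1P[<- fin_dp|]; last exact: IH.
apply: le_trans (border_loop_le _ _ _) _.
rewrite /border_step fin_dp /=; case: ifP => [_|/negbT]; first by rewrite /upd_fun /= eqxx.
by rewrite -ltNge => /ltW.
Qed.

Lemma border_loop_src (D0 : V N -> \bar R) l acc :
  (forall v, acc.1 v = D0 v \/ exists2 y, (v, y) \in acc.2 & acc.1 v = y%:E) ->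
  forall v, (foldl (border_step vb dist) acc l).1 v = D0 v \/
    exists2 y, (v, y) \in (foldl (border_step vb dist) acc l).2 &
                (foldl (border_step vb dist) acc l).1 v = y%:E.
Proof.
elim: l acc => [|vv l IH] acc acc_src //=; apply: IH => v.
rewrite /border_step; case: ifP => _ //=; rewrite /upd_fun.
case: eqP => [->|_]; first by right; exists (border_val vb dist vv); rewrite ?mem_rcons ?mem_head.
by case: (acc_src v) => [->|[y yv ->]]; [left | right; exists y; rewrite ?mem_rcons ?inE ?yv ?orbT].
Qed.

Lemma border_loop_sent (P : V N * R -> Prop) l acc :
  (forall z, z \in acc.2 -> P z) ->
  (forall vv, vv \in l -> dp (part N vb) vb vv.1 \is a fin_num ->
     P (vv.2, border_val vb dist vv)) ->
  forall z, z \in (foldl (border_step vb dist) acc l).2 -> P z.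
Proof.
elim: l acc => [|vv l IH] acc P_acc P_l //=; apply: IH; last first.
  by move=> vv' vv'l; apply: P_l; rewrite inE vv'l orbT.
rewrite /border_step; case: ifP => [/andP[fin_dp _]|_] //= z.
by rewrite mem_rcons inE => /predU1P[->|]; [apply: P_l; rewrite ?mem_head | exact: P_acc].
Qed.

End BorderLoop.

Definition absorbed s v x :=
  (exists2 b, part N b = part N v & Dtab s (part N v) b + dp (part N v) b v <= x) \/
  eps k s <= x.

(* No value owed to a vertex is ever lost: it is still in transit, or absorbed. *)
Definition covered s v x :=
  (exists2 y, (v, y) \in pending s & y%:E <= x) \/ absorbed s v x.

Record Inv s : Prop := {
  tab_ge_SD : forall p v, SD vq v <= Dtab s p v;
  msg_ge_SD : forall z, z \in pending s -> SD vq z.1 <= z.2%:E;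
  report_ge_SDo : forall r, r \in reports s -> SDo vq r.1 <= r.2%:E;
  pruned_beyond : forall p, pruned s p -> part N vq != p /\ eps k s < Edist vq p;
  tab_live_closed : forall p b vi, part N b = p -> part N vi = p -> live vi ->
    Dtab s p vi <= Dtab s p b + dp p b vi;
  tab_out_closed : forall p b vj v', part N b = p -> part N vj = p -> adj N vj v' ->
    part N v' != p -> Dtab s p v' <= Dtab s p b + dp p b vj + (w N vj v')%:E;
  source_covered : covered s vq 0;
  out_covered : forall p v', part N v' != p -> covered s v' (Dtab s p v');
  reported_below_eps : forall o,
    Dtab s (part N (vo N o)) (vo N o) + (delta N o)%:E < eps k s ->
    rep s o <= Dtab s (part N (vo N o)) (vo N o) + (delta N o)%:E
}.

Lemma Inv_init : Inv (init_state vq).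
Proof.
split => //=.
- by move=> p v; rewrite leey.
- move=> z; rewrite inE => /eqP -> /=.
  by have := @SD_le_wlen vq [::] isT; rewrite wlen_nil.
- by move=> p b vi _ _ _; rewrite addye ?gee0_neqNy ?dp_ge0.
- by move=> p b vj v' _ _ _ _; rewrite addye ?gee0_neqNy ?dp_ge0 // addye.
- by left; exists 0%R; rewrite ?mem_head.
- by move=> p v' _; right; right; rewrite leey.
- by move=> o; rewrite addye // ltNge leey.
Qed.

Lemma Inv_prune s p : Inv s -> part N vq != p -> eps k s < Edist vq p ->
  Inv (State (Dtab s) (pending s) (reports s)
             (fun p' => if p' == p then true else pruned s p')).
Proof.
move=> [? ? ? far ? ? ? ? ?] vq_p eps_p; split => //= p'.
by case: eqP => [-> _|_ /far].
Qed.

Lemma absorbed_le s v x y : absorbed s v x -> x <= y -> absorbed s v y.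
Proof.
case=> [[b pb bx]|eps_x] xy; last by right; exact: le_trans xy.
by left; exists b => //; exact: le_trans xy.
Qed.

Lemma msg_head_ge_SD s pre post vb (dist : R) : Inv s ->
  pending s = pre ++ (vb, dist) :: post -> SD vq vb <= dist%:E.
Proof.
by move=> Is ps; apply: (msg_ge_SD Is (z := (vb, dist))); rewrite ps mem_cat mem_head orbT.
Qed.

Section Discard.
Variables (s : state N) (pre post : seq (V N * R)) (vb : V N) (dist : R) (ep : \bar R).
Hypothesis Is : Inv s.
Hypothesis pending_s : pending s = pre ++ (vb, dist) :: post.
Hypothesis ep_bound : if pruned s (part N vb) then ep = 0 else eps k s <= ep.
Hypothesis discarded : discards s vb dist ep.
Local Notation s' := (State (Dtab s) (pre ++ post) (reports s) (pruned s)).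

(* A message is only discarded when its value is beyond a bound the protocol
   already knows about; for a pruned subgraph that bound is [E(v_q,SG_p)]. *)
Lemma discarded_absorbed : absorbed s vb dist%:E.
Proof.
case/orP: discarded => [ep_lt|tab_lt]; last first.
  by left; exists vb; rewrite // dp_refl // adde0 ltW.
have SD_vb := msg_head_ge_SD Is pending_s.
right; move: ep_bound; case: ifP => [/(pruned_beyond Is)[vq_p eps_lt] _|_ eps_ep].
  apply/ltW/(lt_le_trans eps_lt)/(le_trans _ SD_vb)/Edist_le_SD.
  by rewrite eq_sym.
exact/ltW/(le_lt_trans eps_ep).
Qed.

Lemma covered_discard v x : covered s v x -> covered s' v x.
Proof.
case=> [[y]|]; last by right.
rewrite pending_s mem_cat in_cons => /or3P[y_pre|/eqP[-> ->]|y_post] yx.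
- by left; exists y; rewrite // mem_cat y_pre.
- by right; exact: absorbed_le discarded_absorbed yx.
- by left; exists y; rewrite // mem_cat y_post orbT.
Qed.

Lemma Inv_discard : Inv s'.
Proof.
case: Is => tab_SD msg_SD rep_SD far live_cl out_cl src_cov out_cov rep_eps.
split => //=; last 2 first.
- exact: covered_discard.
- by move=> p v' pv'; apply: covered_discard; exact: out_cov.
by move=> z z_in; apply: msg_SD; move: z_in; rewrite pending_s !mem_cat inE => /orP[|->];
  rewrite ?orbT // => ->.
Qed.

End Discard.

Section Accept.
Variables (s : state N) (pre post : seq (V N * R)) (vb : V N) (dist : R) (ep : \bar R)
  (ord : seq (V N * V N)).
Hypothesis Is : Inv s.
Hypothesis pending_s : pending s = pre ++ (vb, dist) :: post.
Hypothesis ep_bound : if pruned s (part N vb) then ep = 0 else eps k s <= ep.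
Hypothesis ord_perm : perm_eq ord (out_pairs (part N vb)).
Hypothesis accepted : ~~ discards s vb dist ep.
Local Notation p := (part N vb).
Local Notation Dset := (Dset s vb dist).
Local Notation relaxes := (relaxes s vb dist).
Local Notation Drelax := (Drelax s vb dist).
Local Notation D' := (border_loop s vb dist ord).1.
Local Notation sent := (border_loop s vb dist ord).2.
Local Notation s' := (State (fun p' => if p' == p then D' else Dtab s p')
  (pre ++ post ++ sent) (reports s ++ new_reports s vb dist ep) (pruned s)).

Let SD_vb : SD vq vb <= dist%:E := msg_head_ge_SD Is pending_s.

Lemma mem_ord vj v' :
  ((vj, v') \in ord) = [&& part N vj == p, adj N vj v' & part N v' != p].
Proof. by rewrite (perm_mem ord_perm) mem_out_pairs. Qed.

Lemma Dset_le v : Dset v <= Dtab s p v.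
Proof.
move: accepted; rewrite /discards negb_or => /andP[_].
by rewrite /Dset /upd_fun; case: eqP => [->|]; rewrite // leNgt.
Qed.

Lemma Dset_vb : Dset vb = dist%:E.
Proof. by rewrite /Dset /upd_fun eqxx. Qed.

Lemma Dset_ne v : v != vb -> Dset v = Dtab s p v.
Proof. by rewrite /Dset /upd_fun => /negbTE ->. Qed.

Lemma Drelax_le v : Drelax v <= Dset v.
Proof. by rewrite /Drelax; case: ifP => // /and4P[]. Qed.

Lemma Drelax_relaxes v : relaxes v -> Drelax v = dist%:E + dp p vb v.
Proof.
by rewrite /Drelax => rv; rewrite rv; case/and4P: rv => _ _ fin_dp _; rewrite EFinD fineK.
Qed.

Lemma Drelax_vb : Drelax vb = dist%:E.
Proof. by rewrite /Drelax; case: ifP => _; rewrite ?Dset_vb // dp_refl //= addr0. Qed.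

Lemma Drelax_le_dp v : part N v = p -> live v -> Drelax v <= dist%:E + dp p vb v.
Proof.
move=> pv lv; have [fin_dp|/dp_fin_numPn->] := boolP (dp p vb v \is a fin_num); last first.
  by rewrite addey // leey.
have [rv|nrv] := boolP (relaxes v); first by rewrite Drelax_relaxes.
rewrite /Drelax (negbTE nrv); move: nrv; rewrite /relaxes pv eqxx lv fin_dp /= -ltNge.
by rewrite EFinD fineK // => /ltW.
Qed.

Lemma Drelax_out v : part N v != p -> Drelax v = Dtab s p v.
Proof.
move=> pv; rewrite /Drelax /relaxes (negbTE pv) /= Dset_ne //.
by apply: contraNneq pv => ->.
Qed.

Lemma Drelax_ge_SD v : SD vq v <= Drelax v.
Proof.
have [rv|nrv] := boolP (relaxes v).
  by rewrite Drelax_relaxes // (le_trans (SD_le_dp vq p vb v)) // leeD2r // SD_vb.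
rewrite /Drelax (negbTE nrv); have [->|nv] := eqVneq v vb; first by rewrite Dset_vb SD_vb.
by rewrite Dset_ne // tab_ge_SD.
Qed.

Lemma border_valE vv : dp p vb vv.1 \is a fin_num ->
  (border_val vb dist vv)%:E = dist%:E + dp p vb vv.1 + (w N vv.1 vv.2)%:E.
Proof. by move=> fin_dp; rewrite /border_val !EFinD fineK. Qed.

Lemma loop_le v : D' v <= Drelax v.
Proof. exact: border_loop_le. Qed.

Lemma loop_le_border vj v' : adj N vj v' -> part N vj = p -> part N v' != p ->
  D' v' <= dist%:E + dp p vb vj + (w N vj v')%:E.
Proof.
move=> vjv' pvj pv'; have [fin_dp|/dp_fin_numPn->] := boolP (dp p vb vj \is a fin_num).
  have := @border_loop_le_val vb dist ord (Drelax, [::]) (vj, v');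
  by rewrite border_valE // mem_ord pvj eqxx vjv' pv'; apply.
by rewrite addey // addye // leey.
Qed.

Lemma sent_ge_SD z : z \in sent -> SD vq z.1 <= z.2%:E.
Proof.
apply: (border_loop_sent (P := fun z => SD vq z.1 <= z.2%:E)) => // -[vj v'].
rewrite mem_ord => /and3P[/eqP pvj vjv' _] fin_dp /=.
rewrite border_valE // (le_trans (SD_le_edge vq vjv')) // leeD2r //.
by rewrite (le_trans (SD_le_dp vq p vb vj)) // leeD2r.
Qed.

Lemma sent_out z : z \in sent -> part N z.1 != p.
Proof.
by apply: (border_loop_sent (P := fun z => part N z.1 != p)) => // -[vj v'];
  rewrite mem_ord => /and3P[].
Qed.

Lemma loop_src v : D' v = Drelax v \/ exists2 y, (v, y) \in sent & D' v = y%:E.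
Proof. by apply: border_loop_src => v'; left. Qed.

Lemma loop_in v : part N v = p -> D' v = Drelax v.
Proof.
move=> pv; case: (loop_src v) => // -[y /sent_out /=]; by rewrite pv eqxx.
Qed.

Lemma tab_accept_le p' v : Dtab s' p' v <= Dtab s p' v.
Proof.
rewrite /=; case: eqP => [->|_] //.
by rewrite (le_trans (loop_le v)) // (le_trans (Drelax_le v)) // Dset_le.
Qed.

Lemma rep_accept_le o : rep s' o <= rep s o.
Proof. exact: rep_catr_le. Qed.

Lemma eps_accept_le : eps k s' <= eps k s.
Proof.
apply: eps_antimono rep_accept_le; apply/fintype.subsetP => o.
by rewrite !inE /= has_cat => ->.
Qed.

Lemma covered_accept v x : covered s v x -> covered s' v x.
Proof.
case=> [[y]|[[b pb bx]|eps_x]]; last first.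
- by right; right; exact: le_trans eps_accept_le eps_x.
- by right; left; exists b => //; apply: le_trans bx; rewrite leeD2r // tab_accept_le.
rewrite pending_s mem_cat in_cons => /or3P[y_pre|/eqP[-> ->]|y_post] yx.
- by left; exists y; rewrite //= mem_cat y_pre.
- right; left; exists vb => //=.
  by rewrite eqxx loop_in // Drelax_vb dp_refl // adde0.
- by left; exists y; rewrite //= !mem_cat y_post orbT.
Qed.

Lemma accept_tab_ge_SD p' v : SD vq v <= Dtab s' p' v.
Proof.
rewrite /=; case: eqP => _; last exact: tab_ge_SD.
case: (loop_src v) => [->|[y /sent_ge_SD yv ->]] //; exact: Drelax_ge_SD.
Qed.

Lemma accept_msg_ge_SD z : z \in pending s' -> SD vq z.1 <= z.2%:E.
Proof.
rewrite /= !mem_cat => /or3P[z_in|z_in|]; last exact: sent_ge_SD.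
all: by apply: (msg_ge_SD Is); rewrite pending_s mem_cat ?z_in // in_cons z_in !orbT.
Qed.

Lemma accept_report_ge_SDo r : r \in reports s' -> SDo vq r.1 <= r.2%:E.
Proof.
rewrite /= mem_cat => /orP[|]; first exact: report_ge_SDo.
case/mapP=> o; rewrite mem_filter => /andP[/andP[/and4P[_ _ fin_dp _] _] _] -> /=.
by rewrite /SDo !EFinD fineK // leeD2r // (le_trans (SD_le_dp vq p vb _)) // leeD2r.
Qed.

Lemma accept_pruned_beyond p' : pruned s' p' -> part N vq != p' /\ eps k s' < Edist vq p'.
Proof.
by move/(pruned_beyond Is) => [vq_p' eps_lt]; split; rewrite // (le_lt_trans eps_accept_le).
Qed.

Lemma accept_live_closed p' b vi : part N b = p' -> part N vi = p' -> live vi ->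
  Dtab s' p' vi <= Dtab s' p' b + dp p' b vi.
Proof.
move=> pb pvi lvi /=; case: eqP => [pp'|_]; last exact: tab_live_closed.
rewrite pp' in pb pvi *; rewrite !loop_in //.
have [rb|nrb] := boolP (relaxes b).
  rewrite (Drelax_relaxes rb) (le_trans (Drelax_le_dp pvi lvi)) //.
  by rewrite -addeA leeD2l // dp_triangle.
have [->|nb] := eqVneq b vb; first by rewrite Drelax_vb Drelax_le_dp.
have -> : Drelax b = Dtab s p b by rewrite /Drelax (negbTE nrb) Dset_ne.
rewrite (le_trans _ (tab_live_closed Is pb pvi lvi)) //.
exact: le_trans (Drelax_le vi) (Dset_le vi).
Qed.

Lemma accept_out_closed p' b vj v' : part N b = p' -> part N vj = p' -> adj N vj v' ->
  part N v' != p' -> Dtab s' p' v' <= Dtab s' p' b + dp p' b vj + (w N vj v')%:E.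
Proof.
move=> pb pvj vjv' pv' /=; case: eqP => [pp'|_]; last exact: tab_out_closed.
rewrite pp' in pb pvj pv' *; rewrite (loop_in pb).
have [rb|nrb] := boolP (relaxes b).
  rewrite (Drelax_relaxes rb) (le_trans (loop_le_border vjv' pvj pv')) //.
  by rewrite leeD2r // -addeA leeD2l // dp_triangle.
have [->|nb] := eqVneq b vb; first by rewrite Drelax_vb loop_le_border.
have -> : Drelax b = Dtab s p b by rewrite /Drelax (negbTE nrb) Dset_ne.
rewrite (le_trans _ (tab_out_closed Is pb pvj vjv' pv')) //.
by rewrite (le_trans (loop_le v')) // Drelax_out.
Qed.

Lemma accept_out_covered p' v' : part N v' != p' -> covered s' v' (Dtab s' p' v').
Proof.
move=> pv' /=; case: eqP => [pp'|_]; last exact/covered_accept/(out_covered Is).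
rewrite pp' in pv' *; case: (loop_src v') => [->|[y yv' ->]].
  by rewrite Drelax_out //; exact/covered_accept/(out_covered Is).
by left; exists y; rewrite // !mem_cat yv' !orbT.
Qed.

Lemma relaxes_vb : live vb -> relaxes vb.
Proof. by move=> lvb; rewrite /relaxes eqxx lvb dp_refl //= Dset_vb addr0 lexx. Qed.

(* An object relaxed by this message and below [ep] is reported right now; if
   its subgraph is pruned, it cannot be below [eps] at all. *)
Lemma accept_reported_below_eps o :
  Dtab s' (part N (vo N o)) (vo N o) + (delta N o)%:E < eps k s' ->
  rep s' o <= Dtab s' (part N (vo N o)) (vo N o) + (delta N o)%:E.
Proof.
rewrite /=; case: eqP => [po|_ lt_eps]; last first.
  exact/(le_trans (rep_accept_le o))/(reported_below_eps Is)/(lt_le_trans lt_eps eps_accept_le).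
rewrite loop_in // => lt_eps.
have [ro|nro] := boolP (relaxes (vo N o)); last first.
  have lvo : live (vo N o) by apply/existsP; exists o.
  have vo_vb : vo N o != vb.
    by apply: contraNneq nro => vo_eq; rewrite vo_eq relaxes_vb -?vo_eq.
  rewrite /Drelax (negbTE nro) Dset_ne // -po in lt_eps *.
  exact/(le_trans (rep_accept_le o))/(reported_below_eps Is)/(lt_le_trans lt_eps eps_accept_le).
have fin_dp : dp p vb (vo N o) \is a fin_num by case/and4P: ro.
have Drelax_vo : Drelax (vo N o) = (dist + fine (dp p vb (vo N o)))%:E.
  by rewrite (Drelax_relaxes ro) EFinD fineK.
have lt_ep : ((dist + fine (dp p vb (vo N o))) + delta N o)%:E < ep.
  move: ep_bound; case: ifP => [/(pruned_beyond Is)[vq_p eps_lt] _|_ eps_ep]; last first.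
    by rewrite EFinD -Drelax_vo (lt_le_trans lt_eps) // (le_trans eps_accept_le).
  have E_SD : Edist vq p <= SD vq (vo N o) by rewrite -po Edist_le_SD // po eq_sym.
  have : Drelax (vo N o) + (delta N o)%:E < Drelax (vo N o) + (delta N o)%:E.
    rewrite (lt_le_trans lt_eps) // (le_trans eps_accept_le) // ltW //.
    rewrite (lt_le_trans eps_lt) // (le_trans E_SD) // (le_trans (Drelax_ge_SD _)) //.
    by rewrite leeDl // lee_fin.
  by rewrite ltxx.
rewrite Drelax_vo -EFinD; apply: rep_le_report; rewrite mem_cat.
by apply/orP; right; apply/mapP; exists o; rewrite // mem_filter mem_enum ro lt_ep.
Qed.

Lemma Inv_accept : Inv s'.
Proof.
split.
- exact: accept_tab_ge_SD.
- exact: accept_msg_ge_SD.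
- exact: accept_report_ge_SDo.
- exact: accept_pruned_beyond.
- exact: accept_live_closed.
- exact: accept_out_closed.
- exact/covered_accept/(source_covered Is).
- exact: accept_out_covered.
- exact: accept_reported_below_eps.
Qed.

End Accept.

Lemma Inv_step s s' : Inv s -> step vq k s s' -> Inv s'.
Proof.
move=> + st; case: st => [{}s pre post vb dist ep ord pending_s ep_bound ord_perm|
                          {}s p _ vq_p eps_lt] Is.
  have [disc|acc] := boolP (discards s vb dist ep).
    by rewrite process_discard //; exact: (Inv_discard Is pending_s ep_bound disc).
  by rewrite process_accept //; exact: (Inv_accept Is pending_s ep_bound ord_perm acc).
exact: Inv_prune.
Qed.

Lemma Inv_execution ex n i : execution vq k ex n -> (i <= n)%N -> Inv (ex i).
Proof.
case=> ex0 exS; elim: i => [|i IH] le_in; first by rewrite ex0; exact: Inv_init.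
by apply: Inv_step (IH (ltnW le_in)) _; exact: exS.
Qed.

Section Quiescent.
Variable s : state N.
Hypothesis Is : Inv s.
Hypothesis quiet : pending s = [::].

Lemma absorbed_of_covered v x : covered s v x -> absorbed s v x.
Proof. by case=> // -[y]; rewrite quiet. Qed.

Lemma absorbed_edge u v (L : R) : adj N u v -> absorbed s u L%:E ->
  absorbed s v (L + w N u v)%:E.
Proof.
move=> uv [[b pb bu]|eps_L]; last by right; rewrite (le_trans eps_L) // lee_fin lerDl w_ge0.
have [puv|puv] := eqVneq (part N v) (part N u).
  left; exists b; rewrite puv //.
  rewrite (le_trans (leeD2l _ (dp_le_edge b uv erefl puv))) //.
  by rewrite addeA EFinD leeD2r.
apply: absorbed_le (absorbed_of_covered (out_covered Is puv)) _.
by rewrite (le_trans (tab_out_closed Is pb erefl uv puv)) // EFinD leeD2r.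
Qed.

Lemma absorbed_walk u (t : seq (V N)) (L : R) : path (adj N) u t ->
  absorbed s u L%:E -> absorbed s (last u t) (L + wlen u t)%:E.
Proof.
elim: t u L => [|x t IH] u L /=; first by rewrite wlen_nil addr0.
by case/andP=> ux xt abs_u; rewrite wlen_cons addrA; apply/IH/absorbed_edge.
Qed.

Lemma rep_le_walk o (t : seq (V N)) : path (adj N) vq t -> last vq t = vo N o ->
  (wlen vq t + delta N o)%:E < eps k s -> rep s o <= (wlen vq t + delta N o)%:E.
Proof.
move=> vq_t t_o lt_eps.
have := absorbed_walk vq_t (absorbed_of_covered (source_covered Is)).
rewrite add0r t_o => -[[b pb bo]|eps_t]; last first.
  by move: lt_eps; rewrite ltNge (le_trans eps_t) // lee_fin lerDl.
have lvo : live (vo N o) by apply/existsP; exists o.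
have tab_o : Dtab s (part N (vo N o)) (vo N o) + (delta N o)%:E <= (wlen vq t + delta N o)%:E.
  by rewrite EFinD leeD2r // (le_trans (tab_live_closed Is pb erefl lvo)).
by rewrite (le_trans _ tab_o) // (reported_below_eps Is) // (le_lt_trans tab_o).
Qed.

Hypothesis connected : forall u v, exists t, path (adj N) u t /\ last u t = v.

Lemma reported_ge_k : (k < #|O N|)%N -> (k <= #|reported s|)%N.
Proof.
move=> k_lt; rewrite leqNgt; apply/negP => lt_k.
suff : (#|O N| <= #|reported s|)%N by rewrite leqNgt (ltn_trans lt_k k_lt).
rewrite -cardsT subset_leq_card //; apply/fintype.subsetP => o _.
have [t [vq_t t_o]] := connected vq (vo N o).
apply: reported_of_rep_lty; rewrite (le_lt_trans (rep_le_walk vq_t t_o _)) ?ltry //.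
by rewrite eps_oo ?ltry.
Qed.

Lemma returned_rep_le_eps Rq o : returned k s Rq -> (k <= #|reported s|)%N ->
  o \in Rq -> rep s o <= eps k s.
Proof.
move=> [Rq_sub card_Rq best] le_k o_Rq; rewrite leNgt; apply/negP => eps_lt.
have : [set o2 in reported s | rep s o2 <= eps k s] \subset Rq :\ o.
  apply/fintype.subsetP => o2; rewrite inE => /andP[o2_rep o2_le].
  rewrite in_setD1; apply/andP; split.
    by apply: contraTneq o2_le => ->; rewrite -ltNge.
  apply: contraTT o2_le => o2_Rq; rewrite -ltNge (lt_le_trans eps_lt) // best //.
  by rewrite inE o2_Rq.
move/subset_leq_card/(leq_trans (nb_rep_le_eps le_k)).
have := cardsD1 o Rq; rewrite o_Rq card_Rq (minn_idPl le_k) add1n => ->.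
by rewrite ltnn.
Qed.

Lemma returned_nearest Rq o o' : (k < #|O N|)%N -> returned k s Rq ->
  o \in Rq -> o' \notin Rq -> SDo vq o <= SDo vq o'.
Proof.
move=> k_lt ret o_Rq o'_Rq; have le_k := reported_ge_k k_lt.
have rep_o := returned_rep_le_eps ret le_k o_Rq.
have SDo_o : SDo vq o <= rep s o by apply: le_rep => x /(report_ge_SDo Is).
rewrite leNgt; apply/negP => lt_o'.
have : SD vq (vo N o') < rep s o - (delta N o')%:E.
  by rewrite lteBrDr // (lt_le_trans lt_o').
case/ereal_inf_lt => _ [t /andP[vq_t /eqP t_o'] <-]; rewrite lteBrDr // -EFinD => lt_t.
have rep_o' := rep_le_walk vq_t t_o' (lt_le_trans lt_t rep_o).
have o'_rep : o' \in reported s :\: Rq.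
  by rewrite inE o'_Rq reported_of_rep_lty // (le_lt_trans rep_o') ?ltry.
case: ret => _ _ best; have := best _ _ o_Rq o'_rep.
by rewrite leNgt (le_lt_trans rep_o' lt_t).
Qed.

End Quiescent.

End Protocol.
End Network.

Theorem theorem2 (R : realType) (N : net R) (vq : V N) (k : nat)
  (adj_sym : forall u v, adj N u v = adj N v u)
  (w_sym : forall u v, adj N u v -> w N u v = w N v u)
  (w_ge0 : forall u v, adj N u v -> 0 <= w N u v)
  (w_euclid : forall u v, adj N u v -> euclid (pos N u) (pos N v) <= w N u v)
  (connected : forall u v, exists s, path (adj N) u s /\ last u s = v)
  (delta_ge0 : forall o, 0 <= delta N o)
  (k_gt0 : (0 < k)%N) (card_O : (k < #|O N|)%N)
  (ex : nat -> state N) (n : nat) :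
  execution vq k ex n -> pending (ex n) = [::] ->
  forall Rq : {set O N}, returned k (ex n) Rq ->
    #|Rq| = k /\
    forall o o', o \in Rq -> o' \notin Rq -> (SDo vq o <= SDo vq o')%E.
Proof.
move=> exec quiet Rq ret.
have Is := Inv_execution adj_sym w_ge0 w_euclid delta_ge0 k_gt0 exec (leqnn n).
have le_k := reported_ge_k w_ge0 delta_ge0 k_gt0 Is quiet connected card_O.
split; first by case: ret => _ -> _; exact/minn_idPl.
move=> o o'; exact: (returned_nearest w_ge0 delta_ge0 k_gt0 Is quiet connected card_O ret).
Qed.
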